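(* Let $g_1(s),\dots,g_n(s)$ and $f(s)$ be rational transfer functions such that there is $\gamma>0$ with $\mathrm{Re}(g_i(s))\ge\frac1\gamma|g_i(s)|^2$ for all $\mathrm{Re}(s)>0$ and all $i$, $f$ is positive real ($\mathrm{Re}(f(s))>0$ for $\mathrm{Re}(s)>0$, $\mathrm{Im}(f(s))=0$ for $\mathrm{Re}(s)=0$), and for every $\eta>0$, $M(\eta):=\sup_{s\in(-j\eta,+j\eta)}\max_i|g_i^{-1}(s)|$ is finite. Let $V_k,\hat V_k\in\mathbb{R}^{n\times k}$ with $V_k^TV_k=\hat V_k^T\hat V_k=I$ and let $\Lambda_k\succeq0$ be symmetric. Define $$T_k(s)=V_k(V_k^T\mathrm{diag}\{g_i^{-1}(s)\}V_k+f(s)\Lambda_k)^{-1}V_k^T,\quad \hat T_k(s)=\hat V_k(\hat V_k^T\mathrm{diag}\{g_i^{-1}(s)\}\hat V_k+f(s)\Lambda_k)^{-1}\hat V_k^T.$$ Then for any $\eta>0$, $$\sup_{s\in(-j\eta,+j\eta)}\|T_k(s)-\hat T_k(s)\|\le2(\gamma+\gamma^2M(\eta))\|V_k-\hat V_k\|_F.$$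
   Context: $\|\cdot\|$ is the spectral norm and $\|\cdot\|_F$ the Frobenius norm; $s\in(-j\eta,+j\eta)$ means $s=j\omega$ with $|\omega|<\eta$. *)

From HB Require Import structures.
From mathcomp Require Import all_boot all_order all_algebra.
From mathcomp Require Import classical_sets reals.
From mathcomp.real_closed Require Import complex.
Set Implicit Arguments. Unset Strict Implicit. Unset Printing Implicit Defensive.
Import Order.TTheory GRing.Theory Num.Theory.
Local Open Scope ring_scope.

Section Defs.
Variable R : realType.
Local Notation C := R[i].

Definition cabs (z : C) : R := Num.sqrt (complex.Re z ^+ 2 + complex.Im z ^+ 2).

Definition vnorm m (x : 'cV[C]_m) : R :=
  Num.sqrt (\sum_(i < m) cabs (x i 0) ^+ 2).

Definition specnorm m n (A : 'M[C]_(m, n)) : R :=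
  sup [set vnorm (A *m x) | x in [set x : 'cV[C]_n | vnorm x <= 1]]%classic.

Definition frobnorm m n (A : 'M[R]_(m, n)) : R :=
  Num.sqrt (\sum_(i < m) \sum_(j < n) A i j ^+ 2).

(** A rational transfer function with real coefficients, given as a
    coprime numerator/denominator pair (denominator nonzero). *)
Record ratfun := RatFun { num : {poly R}; den : {poly R} }.

Definition wf_ratfun (g : ratfun) : Prop :=
  den g != 0 /\ coprimep (num g) (den g).

Definition peval (p : {poly R}) (s : C) : C := (map_poly (real_complex R) p).[s].

(** value g(s) (with the library convention x/0 = 0 at poles) *)
Definition reval (g : ratfun) (s : C) : C := peval (num g) s / peval (den g) s.

Definition rinv_eval (g : ratfun) (s : C) : C := peval (den g) s / peval (num g) s.

Definition jw (w : R) : C := Complex 0 w.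

(** M(eta) is finite: g_i^{-1} has no pole on the segment and is bounded there *)
Definition M_finite n (g : 'I_n -> ratfun) : Prop :=
  forall eta : R, 0 < eta -> exists B : R, forall (i : 'I_n) (w : R), `|w| < eta ->
    peval (num (g i)) (jw w) != 0 /\ cabs (rinv_eval (g i) (jw w)) <= B.

Definition Mval n (g : 'I_n -> ratfun) (eta : R) : R :=
  sup [set cabs (rinv_eval (g iw.1) (jw iw.2))
         | iw in [set iw : 'I_n * R | `|iw.2| < eta]]%classic.

Definition Tmat n k (g : 'I_n -> ratfun) (f : ratfun) (V : 'M[R]_(n, k))
    (L : 'M[R]_k) (s : C) : 'M[C]_n :=
  let Vc := map_mx (real_complex R) V in
  Vc *m invmx (Vc^T *m diag_mx (\row_i rinv_eval (g i) s) *m Vc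
               + reval f s *: map_mx (real_complex R) L) *m Vc^T.
End Defs.

(* On the imaginary axis the hypotheses pass to the limit from the right
   half-plane: Re g >= |g|^2/gamma says exactly Re (1/g) >= 1/gamma, and f(jw)
   is a nonnegative real.  The limit is taken along real polynomials in
   Re s: one that is nonnegative on (0, eps) outside finitely many points is
   nonnegative at 0.
   Hence A = V^T diag{g_i^{-1}(jw)} V + f(jw) Lambda satisfies
   Re <x, A x> >= |x|^2 / gamma for every orthonormal V, so ||A^{-1}|| <= gamma.
   With A, Ah built from V, Vh and E = V - Vh,
     T - Th = E A^{-1} V^T + Vh Ah^{-1} (Ah - A) A^{-1} V^T + Vh Ah^{-1} E^T,
   where ||Ah - A|| <= 2 M ||E||_F, which gives gamma + 2 gamma^2 M + gamma. *)

From HB Require Import structures.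
From mathcomp Require Import all_boot all_order all_algebra.
From mathcomp Require Import classical_sets reals.
From mathcomp.real_closed Require Import complex polyrcf.
From mathcomp Require Import ring lra.
Import Order.TTheory GRing.Theory Num.Theory.
Set Implicit Arguments. Unset Strict Implicit. Unset Printing Implicit Defensive.
Local Open Scope ring_scope.

Section ComplexParts.
Local Open Scope complex_scope.
Variable R : rcfType.
Implicit Types (a b c d : R) (x y : R[i]).
Local Notation Re := (@complex.Re R).
Local Notation Im := (@complex.Im R).

Lemma complex_ext x y : Re x = Re y -> Im x = Im y -> x = y.
Proof. by case: x => ? ?; case: y => ? ? /= -> ->. Qed.

Lemma ReM x y : Re (x * y) = Re x * Re y - Im x * Im y.
Proof. by case: x; case: y. Qed.

Lemma ImM x y : Im (x * y) = Re x * Im y + Im x * Re y.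
Proof. by case: x; case: y. Qed.

Lemma Re_div a b c d : Re ((a +i* b) / (c +i* d)) = (a * c + b * d) / (c ^+ 2 + d ^+ 2).
Proof. rewrite /=; ring. Qed.

Lemma Im_div a b c d : Im ((a +i* b) / (c +i* d)) = (b * c - a * d) / (c ^+ 2 + d ^+ 2).
Proof. rewrite /=; ring. Qed.

Lemma complex_eq0 a b : (a +i* b == 0) = (a ^+ 2 + b ^+ 2 == 0).
Proof.
rewrite paddr_eq0 ?sqr_ge0 // !sqrf_eq0.
by apply/eqP/andP => [[-> ->]|[/eqP -> /eqP ->]].
Qed.

End ComplexParts.

Section CauchySchwarz.
Variable R : realFieldType.

Lemma sqr_le_of_quadratic (S A B : R) : 0 <= A ->
  (forall t, 0 <= t ^+ 2 * A - 2 * t * S + B) -> (A = 0 -> S = 0) ->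
  S ^+ 2 <= A * B.
Proof.
move=> A_ge0 quad_ge0 S0; have [A_eq0|A_neq0] := eqVneq A 0.
  by rewrite A_eq0 S0 // expr0n mul0r.
have A_gt0 : 0 < A by rewrite lt_def A_neq0.
have := quad_ge0 (S / A).
have -> : (S / A) ^+ 2 * A - 2 * (S / A) * S + B = B - S ^+ 2 / A by field.
by rewrite subr_ge0 ler_pdivrMr // mulrC.
Qed.

Lemma sqr_sum_mul_le (I : finType) (u v : I -> R) :
  (\sum_i u i * v i) ^+ 2 <= (\sum_i u i ^+ 2) * (\sum_i v i ^+ 2).
Proof.
apply: sqr_le_of_quadratic => [|t|u0].
- by apply: sumr_ge0 => i _; apply: sqr_ge0.
- rewrite mulr_sumr mulr_sumr -sumrB -big_split /=; apply: sumr_ge0 => i _.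
  have -> : t ^+ 2 * u i ^+ 2 - 2 * t * (u i * v i) + v i ^+ 2 = (t * u i - v i) ^+ 2
    by ring.
  exact: sqr_ge0.
- have ui0 := psumr_eq0P (fun i _ => sqr_ge0 (u i)) u0.
  by apply: big1 => i _; have /eqP := ui0 i isT; rewrite sqrf_eq0 => /eqP ->; rewrite mul0r.
Qed.

End CauchySchwarz.

Section VectorNorm.
Local Open Scope complex_scope.
Variable R : realType.
Local Notation C := R[i].
Local Notation Re := (@complex.Re R).
Local Notation Im := (@complex.Im R).
Implicit Types (m p : nat).

Lemma cabs_sqr (z : C) : cabs z ^+ 2 = Re z ^+ 2 + Im z ^+ 2.
Proof. by rewrite sqr_sqrtr // addr_ge0 // sqr_ge0. Qed.

Definition redot m (x y : 'cV[C]_m) : R :=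
  \sum_i (Re (x i 0) * Re (y i 0) + Im (x i 0) * Im (y i 0)).

Definition sqnorm m (x : 'cV[C]_m) : R := redot x x.

Lemma sqnormE m (x : 'cV[C]_m) : sqnorm x = \sum_i (Re (x i 0) ^+ 2 + Im (x i 0) ^+ 2).
Proof. by apply: eq_bigr => i _; rewrite !expr2. Qed.

Lemma sqnorm_ge0 m (x : 'cV[C]_m) : 0 <= sqnorm x.
Proof. by rewrite sqnormE; apply: sumr_ge0 => i _; rewrite addr_ge0 ?sqr_ge0. Qed.

Lemma sqnorm_eq0 m (x : 'cV[C]_m) : sqnorm x = 0 -> x = 0.
Proof.
rewrite sqnormE => /(psumr_eq0P (fun l _ => addr_ge0 (sqr_ge0 _) (sqr_ge0 _))) x0.
apply/matrixP => i j; rewrite (ord1 j) mxE; have /eqP := x0 i isT.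
by rewrite -complex_eq0; case: (x i 0) => a b /eqP.
Qed.

Lemma vnormE m (x : 'cV[C]_m) : vnorm x = Num.sqrt (sqnorm x).
Proof. by rewrite sqnormE; congr Num.sqrt; apply: eq_bigr => i _; rewrite cabs_sqr. Qed.

Lemma vnorm_ge0 m (x : 'cV[C]_m) : 0 <= vnorm x.
Proof. exact: sqrtr_ge0. Qed.

Lemma sqr_vnorm m (x : 'cV[C]_m) : vnorm x ^+ 2 = sqnorm x.
Proof. by rewrite vnormE sqr_sqrtr // sqnorm_ge0. Qed.

Lemma redot0l m (y : 'cV[C]_m) : redot 0 y = 0.
Proof. by apply: big1 => i _; rewrite mxE !mul0r addr0. Qed.

Lemma redotDr m (x y z : 'cV[C]_m) : redot x (y + z) = redot x y + redot x z.
Proof. by rewrite -big_split; apply: eq_bigr => i _; rewrite !mxE !raddfD /=; ring. Qed.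

Lemma redotC m (x y : 'cV[C]_m) : redot x y = redot y x.
Proof. by apply: eq_bigr => i _; rewrite mulrC [Im _ * _]mulrC. Qed.

Lemma redot_le_vnormM m (x y : 'cV[C]_m) : redot x y <= vnorm x * vnorm y.
Proof.
have CS : redot x y ^+ 2 <= sqnorm x * sqnorm y.
  apply: sqr_le_of_quadratic => [|t|/sqnorm_eq0->]; rewrite ?sqnorm_ge0 ?redot0l //.
  rewrite /sqnorm /redot mulr_sumr mulr_sumr -sumrB -big_split /=.
  apply: sumr_ge0 => i _.
  set a := Re (x i 0); set b := Im (x i 0); set c := Re (y i 0); set d := Im (y i 0).
  have -> : t ^+ 2 * (a * a + b * b) - 2 * t * (a * c + b * d) + (c * c + d * d)
          = (t * a - c) ^+ 2 + (t * b - d) ^+ 2 by ring.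
  by rewrite addr_ge0 ?sqr_ge0.
rewrite !vnormE -sqrtrM ?sqnorm_ge0 //; apply: le_trans (ler_norm _) _.
by rewrite -sqrtr_sqr ler_sqrt // mulr_ge0 ?sqnorm_ge0.
Qed.

Lemma ler_vnormD m (x y : 'cV[C]_m) : vnorm (x + y) <= vnorm x + vnorm y.
Proof.
rewrite -(ger0_norm (addr_ge0 (vnorm_ge0 x) (vnorm_ge0 y))) -sqrtr_sqr vnormE.
rewrite ler_sqrt ?sqr_ge0 // sqrrD !sqr_vnorm /sqnorm !redotDr ![redot (_ + _) _]redotC.
by rewrite !redotDr [redot y x]redotC; have := redot_le_vnormM x y; lra.
Qed.

Lemma vnormN m (x : 'cV[C]_m) : vnorm (- x) = vnorm x.
Proof. by rewrite /vnorm; congr Num.sqrt; apply: eq_bigr => i _; rewrite mxE /cabs !raddfN !sqrrN. Qed.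

Definition mx_bounded m p (A : 'M[C]_(m, p)) (c : R) :=
  forall x, vnorm (A *m x) <= c * vnorm x.

Lemma mx_bounded_le m p (A : 'M[C]_(m, p)) c c' :
  c <= c' -> mx_bounded A c -> mx_bounded A c'.
Proof. by move=> le_cc' hA x; apply: le_trans (hA x) _; rewrite ler_wpM2r ?vnorm_ge0. Qed.

Lemma mx_boundedD m p (A B : 'M[C]_(m, p)) a b :
  mx_bounded A a -> mx_bounded B b -> mx_bounded (A + B) (a + b).
Proof.
move=> hA hB x; rewrite mulmxDl mulrDl; apply: le_trans (ler_vnormD _ _) _.
exact: lerD.
Qed.

Lemma mx_boundedN m p (A : 'M[C]_(m, p)) a : mx_bounded A a -> mx_bounded (- A) a.
Proof. by move=> hA x; rewrite mulNmx vnormN. Qed.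

Lemma mx_boundedM m p q (A : 'M[C]_(m, p)) (B : 'M[C]_(p, q)) a b :
  0 <= a -> mx_bounded A a -> mx_bounded B b -> mx_bounded (A *m B) (a * b).
Proof.
move=> a0 hA hB x; rewrite -mulmxA; apply: le_trans (hA _) _.
by rewrite -mulrA ler_wpM2l.
Qed.

Lemma mx_bounded_sqnorm m p (A : 'M[C]_(m, p)) c : 0 <= c ->
  (forall x, sqnorm (A *m x) <= c ^+ 2 * sqnorm x) -> mx_bounded A c.
Proof.
move=> c0 hA x; rewrite !vnormE -(ger0_norm c0) -sqrtr_sqr -sqrtrM ?sqr_ge0 //.
by rewrite ler_sqrt ?mulr_ge0 ?sqr_ge0 ?sqnorm_ge0.
Qed.

Lemma specnorm_le m p (A : 'M[C]_(m, p)) c : 0 <= c -> mx_bounded A c -> specnorm A <= c.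
Proof.
move=> c0 hA; apply: ge_sup.
  by exists (vnorm (A *m 0)), 0 => //=; rewrite vnormE /sqnorm redot0l sqrtr0.
move=> _ [x /= x1 <-]; apply: le_trans (hA x) _.
by rewrite -[leRHS]mulr1 ler_wpM2l.
Qed.

Lemma mx_bounded_diag m (d : 'rV[C]_m) M : 0 <= M -> (forall i, cabs (d 0 i) <= M) ->
  mx_bounded (diag_mx d) M.
Proof.
move=> M0 hd; apply: mx_bounded_sqnorm => // x; rewrite mul_diag_mx !sqnormE mulr_sumr.
apply: ler_sum => i _; rewrite !mxE ReM ImM.
have : cabs (d 0 i) ^+ 2 <= M ^+ 2 by rewrite ler_pXn2r ?nnegrE ?sqrtr_ge0 ?hd.
rewrite cabs_sqr.
set a := Re (d 0 i); set b := Im (d 0 i); set u := Re (x i 0); set v := Im (x i 0) => h.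
have -> : (a * u - b * v) ^+ 2 + (a * v + b * u) ^+ 2
        = (a ^+ 2 + b ^+ 2) * (u ^+ 2 + v ^+ 2) by ring.
by apply: ler_wpM2r => //; rewrite addr_ge0 ?sqr_ge0.
Qed.

End VectorNorm.

Section RealMatrices.
Local Open Scope complex_scope.
Variable R : realType.
Local Notation C := R[i].
Local Notation Re := (@complex.Re R).
Local Notation Im := (@complex.Im R).
Local Notation mapC A := (map_mx (real_complex R) A).
Implicit Types (m p : nat).

Definition Re_col m (x : 'cV[C]_m) : 'cV[R]_m := \col_i Re (x i 0).
Definition Im_col m (x : 'cV[C]_m) : 'cV[R]_m := \col_i Im (x i 0).
Definition rsqnorm m (a : 'cV[R]_m) : R := (a^T *m a) 0 0.

Lemma redot_ReIm m (x y : 'cV[C]_m) :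
  redot x y = ((Re_col x)^T *m Re_col y) 0 0 + ((Im_col x)^T *m Im_col y) 0 0.
Proof. by rewrite !mxE -big_split; apply: eq_bigr => i _; rewrite !mxE. Qed.

Lemma rsqnorm_ge0 m (a : 'cV[R]_m) : 0 <= rsqnorm a.
Proof. by rewrite /rsqnorm mxE; apply: sumr_ge0 => i _; rewrite mxE -expr2 sqr_ge0. Qed.

Lemma Re_col_map m p (A : 'M[R]_(m, p)) x : Re_col (mapC A *m x) = A *m Re_col x.
Proof.
apply/matrixP => i j; rewrite !mxE raddf_sum; apply: eq_bigr => l _.
by rewrite !mxE; case: (x l 0) => a b /=; rewrite mul0r subr0.
Qed.

Lemma Im_col_map m p (A : 'M[R]_(m, p)) x : Im_col (mapC A *m x) = A *m Im_col x.
Proof.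
apply/matrixP => i j; rewrite !mxE raddf_sum; apply: eq_bigr => l _.
by rewrite !mxE; case: (x l 0) => a b /=; rewrite mul0r addr0.
Qed.

Lemma redot_map m p (B : 'M[R]_(m, p)) x y :
  redot x (mapC B *m y) = redot (mapC B^T *m x) y.
Proof. by rewrite !redot_ReIm !Re_col_map !Im_col_map !trmx_mul !trmxK !mulmxA. Qed.

Lemma mx_bounded_map m p (A : 'M[R]_(m, p)) c : 0 <= c ->
  (forall a, rsqnorm (A *m a) <= c ^+ 2 * rsqnorm a) -> mx_bounded (mapC A) c.
Proof.
move=> c0 hA; apply: mx_bounded_sqnorm => // x.
by rewrite /sqnorm !redot_ReIm Re_col_map Im_col_map mulrDr lerD ?hA.
Qed.

Lemma rsqnorm_isometry m p (V : 'M[R]_(m, p)) a : V^T *m V = 1%:M ->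
  rsqnorm (V *m a) = rsqnorm a.
Proof. by move=> VV; rewrite /rsqnorm trmx_mul -!mulmxA (mulmxA V^T) VV mul1mx. Qed.

Lemma mx_bounded_map_isometry m p (V : 'M[R]_(m, p)) :
  V^T *m V = 1%:M -> mx_bounded (mapC V) 1.
Proof. by move=> VV; apply: mx_bounded_map => // a; rewrite rsqnorm_isometry // expr1n mul1r. Qed.

Lemma mx_bounded_map_coisometry m p (V : 'M[R]_(m, p)) :
  V^T *m V = 1%:M -> mx_bounded (mapC V)^T 1.
Proof.
move=> VV; rewrite map_trmx; apply: mx_bounded_map => // y; rewrite expr1n mul1r.
(* [P] is an orthogonal projection, so [|y|^2 - |V^T y|^2 = |(1 - P) y|^2]. *)
pose P := V *m V^T.
have PT : P^T = P by rewrite /P trmx_mul trmxK.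
have PP : P *m P = P by rewrite /P mulmxA -(mulmxA V) VV mulmx1.
have QQ : (1%:M - P)^T *m (1%:M - P) = 1%:M - P.
  by rewrite [(1%:M - P)^T]raddfB /= trmx1 PT mulmxBl !mulmxBr !mul1mx mulmx1 PP subrr subr0.
have := rsqnorm_ge0 ((1%:M - P) *m y).
rewrite /rsqnorm trmx_mul -mulmxA (mulmxA _ (1%:M - P)) QQ mulmxBl mul1mx mulmxBr.
have entryB (u v : 'M[R]_1) : (u - v) 0 0 = u 0 0 - v 0 0 by rewrite !mxE.
by rewrite entryB subr_ge0 trmx_mul trmxK /P !mulmxA.
Qed.

Lemma frobnorm_ge0 m p (A : 'M[R]_(m, p)) : 0 <= frobnorm A.
Proof. exact: sqrtr_ge0. Qed.

Lemma frobnorm_tr m p (A : 'M[R]_(m, p)) : frobnorm A^T = frobnorm A.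
Proof. by rewrite /frobnorm exchange_big; congr Num.sqrt; do 2!apply: eq_bigr => ? _; rewrite mxE. Qed.

Lemma mx_bounded_map_frobnorm m p (A : 'M[R]_(m, p)) : mx_bounded (mapC A) (frobnorm A).
Proof.
apply: mx_bounded_map (frobnorm_ge0 A) _ => a.
rewrite sqr_sqrtr; last by do 2!apply: sumr_ge0 => ? _; apply: sqr_ge0.
rewrite /rsqnorm !mxE mulr_suml; apply: ler_sum => i _; rewrite !mxE -expr2.
have -> : \sum_j a^T 0 j * a j 0 = \sum_j a j 0 ^+ 2 by apply: eq_bigr => j _; rewrite mxE expr2.
by rewrite (eq_bigr (fun j => A i j * a j 0)) ?sqr_sum_mul_le // => j _; rewrite mxE.
Qed.

End RealMatrices.

Section Coercivity.
Local Open Scope complex_scope.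
Variable R : realType.
Local Notation C := R[i].
Local Notation Re := (@complex.Re R).
Local Notation Im := (@complex.Im R).
Local Notation mapC A := (map_mx (real_complex R) A).
Implicit Types (m p : nat).

Lemma coercive_unitmx m (A : 'M[C]_m) c : 0 < c ->
  (forall x, c * sqnorm x <= redot x (A *m x)) -> A \in unitmx.
Proof.
move=> c0 hA; rewrite unitmxE unitfE -det_tr; apply/negP => /det0P [v v_neq0 vA].
have Av : A *m v^T = 0 by rewrite -[A]trmxK -trmx_mul vA linear0.
have := hA v^T; rewrite Av redotC redot0l pmulr_rle0 // => v_le0.
have /sqnorm_eq0 /(congr1 trmx) : sqnorm v^T = 0 by apply/eqP; rewrite eq_le v_le0 sqnorm_ge0.
by rewrite trmxK linear0 => v0; rewrite v0 eqxx in v_neq0.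
Qed.

Lemma coercive_invmx_bounded m (A : 'M[C]_m) c : 0 < c ->
  (forall x, c * sqnorm x <= redot x (A *m x)) -> mx_bounded (invmx A) c^-1.
Proof.
move=> c0 hA y; have uA := coercive_unitmx c0 hA.
have := hA (invmx A *m y); rewrite mulmxA mulmxV // mul1mx -sqr_vnorm.
move=> /le_trans /(_ (redot_le_vnormM _ _)).
have := vnorm_ge0 (invmx A *m y); rewrite le0r => /orP [/eqP -> _|X_gt0].
  by rewrite mulr_ge0 ?invr_ge0 ?vnorm_ge0 ?ltW.
by rewrite expr2 mulrA [leRHS]mulrC ler_pM2r // ler_pdivlMl.
Qed.

Lemma redot_diag m (d : 'rV[C]_m) y :
  redot y (diag_mx d *m y) = \sum_i Re (d 0 i) * (Re (y i 0) ^+ 2 + Im (y i 0) ^+ 2).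
Proof. by rewrite mul_diag_mx; apply: eq_bigr => i _; rewrite !mxE ReM ImM; ring. Qed.

Lemma sqnorm_map_isometry m p (V : 'M[R]_(m, p)) x : V^T *m V = 1%:M ->
  sqnorm (mapC V *m x) = sqnorm x.
Proof.
move=> VV; rewrite /sqnorm !redot_ReIm Re_col_map Im_col_map.
by rewrite -!/(rsqnorm _) !rsqnorm_isometry.
Qed.

Lemma redot_scale_map_psd m (L : 'M[R]_m) r x : 0 <= r ->
  (forall a : 'cV[R]_m, 0 <= (a^T *m L *m a) 0 0) ->
  0 <= redot x ((r%:C *: mapC L) *m x).
Proof.
move=> r0 L_psd; rewrite -scalemxAl.
have -> : redot x (r%:C *: (mapC L *m x)) = r * redot x (mapC L *m x).
  by rewrite /redot mulr_sumr; apply: eq_bigr => i _; rewrite !mxE ReM ImM /=; ring.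
by rewrite mulr_ge0 // redot_ReIm Re_col_map Im_col_map !mulmxA addr_ge0.
Qed.

Lemma compression_coercive n k (W : 'M[R]_(n, k)) (d : 'rV[C]_n) (r : R)
    (L : 'M[R]_k) c :
  W^T *m W = 1%:M -> (forall i, c <= Re (d 0 i)) -> 0 <= r ->
  (forall a : 'cV[R]_k, 0 <= (a^T *m L *m a) 0 0) ->
  forall x, c * sqnorm x <= redot x (((mapC W)^T *m diag_mx d *m mapC W + r%:C *: mapC L) *m x).
Proof.
move=> WW cd r0 L_psd x; rewrite mulmxDl redotDr -!mulmxA map_trmx redot_map trmxK.
apply: ler_wpDr; first exact: redot_scale_map_psd.
rewrite redot_diag -(sqnorm_map_isometry x WW) sqnormE mulr_sumr.
by apply: ler_sum => i _; rewrite ler_wpM2r ?addr_ge0 ?sqr_ge0.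
Qed.

End Coercivity.

Lemma invmxB (K : comUnitRingType) k (A B : 'M[K]_k) : A \in unitmx -> B \in unitmx ->
  invmx A - invmx B = invmx B *m (B - A) *m invmx A.
Proof. by move=> uA uB; rewrite mulmxBr mulmxBl mulVmx // mul1mx -mulmxA mulmxV // mulmx1. Qed.

Lemma congruenceB (K : pzRingType) n k (V U : 'M[K]_(n, k)) (D : 'M[K]_n) :
  V^T *m D *m V - U^T *m D *m U = (V - U)^T *m D *m U + V^T *m D *m (V - U).
Proof.
rewrite [(V - U)^T]raddfB /= !mulmxBl mulmxBr.
by rewrite [RHS]addrC addrA subrK.
Qed.

Lemma sandwichB (K : pzRingType) n k (V U : 'M[K]_(n, k)) (A B : 'M[K]_k) :
  V *m A *m V^T - U *m B *m U^T
  = (V - U) *m A *m V^T + U *m (A - B) *m V^T + U *m B *m (V - U)^T.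
Proof.
rewrite [(V - U)^T]raddfB /= !mulmxBl !mulmxBr !mulmxBl.
by rewrite !addrA subrK subrK.
Qed.

Section Perturbation.
Local Open Scope complex_scope.
Variable R : realType.
Local Notation C := R[i].
Local Notation Re := (@complex.Re R).
Local Notation mapC A := (map_mx (real_complex R) A).

Definition compressed_inv n k (V : 'M[R]_(n, k)) (d : 'rV[C]_n) (F : 'M[C]_k) : 'M[C]_n :=
  mapC V *m invmx ((mapC V)^T *m diag_mx d *m mapC V + F) *m (mapC V)^T.

Lemma compressed_inv_perturbation n k (V U : 'M[R]_(n, k)) (d : 'rV[C]_n) (r : R)
    (L : 'M[R]_k) gamma M :
  0 < gamma -> (forall i, gamma^-1 <= Re (d 0 i)) ->
  0 <= M -> (forall i, cabs (d 0 i) <= M) ->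
  0 <= r -> (forall a : 'cV[R]_k, 0 <= (a^T *m L *m a) 0 0) ->
  V^T *m V = 1%:M -> U^T *m U = 1%:M ->
  specnorm (compressed_inv V d (r%:C *: mapC L) - compressed_inv U d (r%:C *: mapC L))
    <= 2 * (gamma + gamma ^+ 2 * M) * frobnorm (V - U).
Proof.
move=> gamma_gt0 d_ge M_ge0 d_le r_ge0 L_psd VV UU.
have gamma_ge0 := ltW gamma_gt0; have Fr_ge0 := frobnorm_ge0 (V - U).
set F := r%:C *: mapC L.
have invertible W : W^T *m W = 1%:M ->
    let A := (mapC W)^T *m diag_mx d *m mapC W + F in
    A \in unitmx /\ mx_bounded (invmx A) gamma.
  move=> WW /=; have coerc := compression_coercive WW d_ge r_ge0 L_psd.
  have ginv_gt0 : 0 < gamma^-1 by rewrite invr_gt0.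
  by split; [apply: coercive_unitmx coerc | rewrite -[gamma]invrK; apply: coercive_invmx_bounded].
have [uA bA] := invertible V VV; have [uB bB] := invertible U UU.
rewrite /compressed_inv sandwichB invmxB //.
set Vc := mapC V; set Uc := mapC U.
have bE : mx_bounded (Vc - Uc) (frobnorm (V - U)).
  by rewrite -map_mxB; apply: mx_bounded_map_frobnorm.
have bET : mx_bounded (Vc - Uc)^T (frobnorm (V - U)).
  by rewrite -map_mxB map_trmx -frobnorm_tr; apply: mx_bounded_map_frobnorm.
have bU := mx_bounded_map_isometry UU.
have bVT := mx_bounded_map_coisometry VV.
have bD := mx_bounded_diag M_ge0 d_le.
have bBA : mx_bounded (Uc^T *m diag_mx d *m Uc + F - (Vc^T *m diag_mx d *m Vc + F))
    (frobnorm (V - U) * M * 1 + 1 * M * frobnorm (V - U)).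
  rewrite opprD addrACA subrr addr0 -opprB congruenceB; apply/mx_boundedN/mx_boundedD.
    by apply: mx_boundedM (mx_boundedM _ bET bD) bU; rewrite ?mulr_ge0.
  by apply: mx_boundedM (mx_boundedM _ bVT bD) bE; rewrite ?mulr_ge0.
apply: specnorm_le; first by rewrite !mulr_ge0 ?addr_ge0 ?mulr_ge0 ?exprn_ge0.
apply: mx_bounded_le (mx_boundedD (mx_boundedD
  (mx_boundedM _ (mx_boundedM _ bE bA) bVT)
  (mx_boundedM _ (mx_boundedM _ bU (mx_boundedM _ (mx_boundedM _ bB bBA) bA)) bVT))
  (mx_boundedM _ (mx_boundedM _ bU bB) bET)); rewrite ?mulr_ge0 ?addr_ge0 ?mulr_ge0 //.
lra.
Qed.

End Perturbation.

Lemma exists_nonroot (D : idomainType) (p : {poly D}) (rs : seq D) :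
  p != 0 -> uniq rs -> (size p <= size rs)%N -> exists2 x, x \in rs & ~~ root p x.
Proof.
move=> p_neq0 rs_uniq size_le; apply/hasP; rewrite has_predC; apply/negP => all_roots.
by have := max_poly_roots p_neq0 all_roots rs_uniq; rewrite ltnNge size_le.
Qed.

Section ImaginaryAxis.
Local Open Scope complex_scope.
Variable R : realType.
Local Notation C := R[i].

Lemma exists_nonroot_in_interval (P : {poly C}) (dl : R) : P != 0 -> 0 < dl ->
  exists e, [/\ 0 < e, e < dl & ~~ root P e%:C].
Proof.
move=> P_neq0 dl_gt0; pose N := size P; pose pt i := dl * i.+1%:R / N.+1%:R.
have pt_gt0 i : 0 < pt i by rewrite !mulr_gt0 ?invr_gt0 ?ltr0Sn.
have pt_inj : injective (fun i => (pt i)%:C).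
  move=> i j /complexI /divIf; rewrite pnatr_eq0 => /(_ isT) /mulfI.
  by rewrite gt_eqF // => /(_ isT) /eqP; rewrite eqr_nat => /eqP [].
have [x x_in nonroot] :=
  exists_nonroot P_neq0 (mkseq_uniq N pt_inj) (eq_leq (esym (size_mkseq _ _))).
case/mapP: x_in => l; rewrite mem_iota add0n => /andP [_ lN] x_eq.
rewrite x_eq in nonroot; exists (pt l); split => //.
by rewrite /pt ltr_pdivrMr ?ltr0Sn // ltr_pM2l // ltr_nat ltnS.
Qed.

Lemma peval_line (p : {poly R}) (w : R) :
  exists pr pi : {poly R}, forall e, peval p (e +i* w) = pr.[e] +i* pi.[e].
Proof.
elim/poly_ind: p => [|q c [qr [qi IH]]].
  by exists 0, 0 => e; rewrite /peval map_poly0 !horner0.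
exists (qr * 'X - qi * w%:P + c%:P), (qr * w%:P + qi * 'X) => e.
rewrite /peval rmorphD rmorphM /= map_polyX map_polyC hornerD hornerM hornerX hornerC.
by rewrite -/(peval q _) IH; apply: complex_ext; rewrite /= !hornerE.
Qed.

Lemma poly_ge0_at0 (p q : {poly R}) (w : R) : p != 0 ->
  (forall e, 0 < e -> peval p (e +i* w) != 0 -> 0 <= q.[e]) -> 0 <= q.[0].
Proof.
move=> p_neq0 q_ge0; rewrite leNgt; apply/negP => q0_lt0.
have /(poly_cont 0 q) [dl dl_gt0 q_near] : 0 < - q.[0] by rewrite oppr_gt0.
pose P := map_poly (real_complex R) p \Po ('X + (jw w)%:P).
have P_neq0 : P != 0.
  by rewrite -size_poly_eq0 size_comp_poly2 ?size_XaddC // size_map_poly size_poly_eq0.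
have [e [e_gt0 e_lt nonroot]] := exists_nonroot_in_interval P_neq0 dl_gt0.
have : peval p (e +i* w) != 0.
  move: nonroot; rewrite /root horner_comp !hornerE /peval.
  by congr (~~ (_.[_] == 0)); apply: complex_ext; rewrite /= ?addr0 ?add0r.
move/(q_ge0 e e_gt0); have := q_near e; rewrite subr0 gtr0_norm // => /(_ e_lt).
by move/(le_lt_trans (ler_norm _)); lra.
Qed.

End ImaginaryAxis.

Section PositiveRealOnAxis.
Local Open Scope complex_scope.
Variable R : realType.
Local Notation C := R[i].
Local Notation Re := (@complex.Re R).

Lemma sqr_cabs_div (a b c d : R) : c ^+ 2 + d ^+ 2 != 0 ->
  cabs ((a +i* b) / (c +i* d)) ^+ 2 = (a ^+ 2 + b ^+ 2) / (c ^+ 2 + d ^+ 2).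
Proof. by move=> cd_neq0; rewrite cabs_sqr Re_div Im_div; field. Qed.

Lemma Re_rinv_eval_ge (g : ratfun R) gamma w : den g != 0 -> 0 < gamma ->
  (forall s : C, 0 < Re s -> cabs (reval g s) ^+ 2 / gamma <= Re (reval g s)) ->
  peval (num g) (jw w) != 0 -> gamma^-1 <= Re (rinv_eval g (jw w)).
Proof.
move=> den_neq0 gamma_gt0 g_pr num_neq0.
have [nr [ni num_line]] := peval_line (num g) w.
have [dr [di den_line]] := peval_line (den g) w.
(* At [e +i* w], [q.[e] >= 0] is [|g|^2 / gamma <= Re g] multiplied by [gamma |den g|^2]. *)
pose q := gamma%:P * (nr * dr + ni * di) - (nr * nr + ni * ni).
have q0_ge0 : 0 <= q.[0].
  apply: (poly_ge0_at0 (w := w) den_neq0) => e e_gt0.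
  rewrite den_line complex_eq0 => N_neq0.
  have N_gt0 : 0 < dr.[e] ^+ 2 + di.[e] ^+ 2 by rewrite lt_def N_neq0 addr_ge0 ?sqr_ge0.
  have := g_pr (e +i* w) e_gt0; rewrite /reval num_line den_line sqr_cabs_div // Re_div.
  rewrite mulrAC ler_pM2r ?invr_gt0 // ler_pdivrMr // /q !hornerE.
  by rewrite subr_ge0 mulrC !expr2.
move: num_neq0 q0_ge0; rewrite /rinv_eval num_line den_line Re_div complex_eq0 /q !hornerE.
move=> N_neq0; have N_gt0 : 0 < nr.[0] ^+ 2 + ni.[0] ^+ 2.
  by rewrite lt_def N_neq0 addr_ge0 ?sqr_ge0.
rewrite ler_pdivlMr // ler_pdivrMl //; lra.
Qed.

Lemma Re_reval_ge0 (f : ratfun R) w : den f != 0 ->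
  (forall s : C, 0 < Re s -> 0 < Re (reval f s)) -> 0 <= Re (reval f (jw w)).
Proof.
move=> den_neq0 f_pr.
have [nr [ni num_line]] := peval_line (num f) w.
have [dr [di den_line]] := peval_line (den f) w.
have q0_ge0 : 0 <= (nr * dr + ni * di).[0].
  apply: (poly_ge0_at0 (w := w) den_neq0) => e e_gt0.
  rewrite den_line complex_eq0 => N_neq0.
  have N_gt0 : 0 < dr.[e] ^+ 2 + di.[e] ^+ 2 by rewrite lt_def N_neq0 addr_ge0 ?sqr_ge0.
  have := f_pr (e +i* w) e_gt0; rewrite /reval num_line den_line Re_div.
  by rewrite pmulr_lgt0 ?invr_gt0 // !hornerE => /ltW.
move: q0_ge0; rewrite /reval num_line den_line Re_div !hornerE => q0_ge0.
by rewrite divr_ge0 // addr_ge0 ?sqr_ge0.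
Qed.

Lemma cabs_rinv_eval_le_Mval n (g : 'I_n -> ratfun R) (eta w : R) i :
  M_finite g -> `|w| < eta -> cabs (rinv_eval (g i) (jw w)) <= Mval g eta.
Proof.
move=> M_fin w_lt; have [B B_bound] := M_fin eta (le_lt_trans (normr_ge0 w) w_lt).
apply: ub_le_sup; last by exists (i, w).
by exists B => _ [[j v] /= v_lt <-]; apply: (B_bound j v v_lt).2.
Qed.

Lemma Mval_ge0 n (g : 'I_n -> ratfun R) (eta w : R) :
  M_finite g -> `|w| < eta -> 0 <= Mval g eta.
Proof.
case: n g => [|n] g M_fin w_lt; last first.
  exact: le_trans (sqrtr_ge0 _) (cabs_rinv_eval_le_Mval ord0 M_fin w_lt).
rewrite /Mval (_ : [set _ | _ in _]%classic = set0) ?sup0 //.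
by apply/seteqP; split => // x [[[]]].
Qed.

End PositiveRealOnAxis.

Theorem lemma6 (R : realType) (n k : nat) (g : 'I_n -> ratfun R) (f : ratfun R)
    (gamma : R) (V Vh : 'M[R]_(n, k)) (L : 'M[R]_k) :
  (forall i, wf_ratfun (g i)) -> wf_ratfun f ->
  0 < gamma ->
  (forall (i : 'I_n) (s : R[i]), 0 < complex.Re s ->
     cabs (reval (g i) s) ^+ 2 / gamma <= complex.Re (reval (g i) s)) ->
  (forall s : R[i], 0 < complex.Re s -> 0 < complex.Re (reval f s)) ->
  (forall s : R[i], complex.Re s = 0 -> complex.Im (reval f s) = 0) ->
  M_finite g ->
  V^T *m V = 1%:M -> Vh^T *m Vh = 1%:M ->
  L^T = L -> (forall x : 'cV[R]_k, 0 <= (x^T *m L *m x) 0 0) ->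
  forall eta : R, 0 < eta ->
  forall w : R, `|w| < eta ->
    specnorm (Tmat g f V L (jw w) - Tmat g f Vh L (jw w))
      <= 2 * (gamma + gamma ^+ 2 * Mval g eta) * frobnorm (V - Vh).
Proof.
move=> wf_g wf_f gamma_gt0 g_pr f_pr f_real M_fin VV VhVh _ L_psd eta eta_gt0 w w_lt.
have [B B_bound] := M_fin eta eta_gt0.
have f_axis : reval f (jw w) = ((complex.Re (reval f (jw w)))%:C)%C.
  by apply: complex_ext => //=; rewrite f_real.
rewrite /Tmat f_axis; apply: compressed_inv_perturbation => //.
- move=> i; rewrite mxE; apply: Re_rinv_eval_ge (wf_g i).1 gamma_gt0 (g_pr i) _.
  exact: (B_bound i w w_lt).1.
- exact: Mval_ge0 M_fin w_lt.
- by move=> i; rewrite mxE; apply: cabs_rinv_eval_le_Mval.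
- exact: Re_reval_ge0 wf_f.1 f_pr.
Qed.
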